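(* Let $(M,d)$ be a metric space, $\mathsf{P}\subseteq M$ a set of $n$ points, $1\le\ell\le k\le n$ integers and $m=\lfloor k/\ell\rfloor$. Let $r_{\mathrm{cen}}=\min_{S\subseteq\mathsf{P},|S|=m}\max_{p\in\mathsf{P}} d_S(p,1)$ and $r_{\mathrm{opt}}=\min_{C'\subseteq\mathsf{P},|C'|=k}\max_{p\in\mathsf{P}} d_{C'}(p,\ell)$. Then $r_{\mathrm{cen}}\le 2r_{\mathrm{opt}}$.
   Context: For a finite set $S\subseteq M$, a point $p\in M$ and an integer $1\le i\le|S|$, $d_S(p,i)$ denotes the radius of the smallest closed ball centered at $p$ containing at least $i$ points of $S$. *)

From HB Require Import structures.
From mathcomp Require Import all_boot all_order all_algebra.
Set Implicit Arguments. Unset Strict Implicit. Unset Printing Implicit Defensive.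
Import Order.TTheory GRing.Theory Num.Theory.
Local Open Scope ring_scope.

Definition is_metric (R : realFieldType) (M : Type) (d : M -> M -> R) : Prop :=
  [/\ forall x y, d x y = 0 <-> x = y,
      forall x y, d x y = d y x &
      forall x y z, d x z <= d x y + d y z].

Definition seqmin (R : realFieldType) (s : seq R) : R :=
  foldr Num.min (head 0 s) s.
Definition seqmax (R : realFieldType) (s : seq R) : R :=
  foldr Num.max (head 0 s) s.

(* The point set P = {pts j | j < n}; subsets of P are {set 'I_n}.
   d_S(p,i): radius of the smallest closed ball centered at p containing at
   least i points of S.  The smallest such radius is always one of the
   distances d p s, s in S, so it is the minimum over those candidate radii r
   for which the ball of radius r contains at least i points of S. *)
Definition dS (R : realFieldType) (M : Type) (d : M -> M -> R) (n : nat)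
    (pts : 'I_n -> M) (S : {set 'I_n}) (p : M) (i : nat) : R :=
  seqmin [seq r <- [seq d p (pts s) | s in S]
         | (i <= #|[set t in S | (d p (pts t) <= r)%R]|)%N].

Definition cost (R : realFieldType) (M : Type) (d : M -> M -> R) (n : nat)
    (pts : 'I_n -> M) (S : {set 'I_n}) (i : nat) : R :=
  seqmax [seq dS d pts S (pts p) i | p : 'I_n].

Definition best_cost (R : realFieldType) (M : Type) (d : M -> M -> R) (n : nat)
    (pts : 'I_n -> M) (size i : nat) : R :=
  seqmin [seq cost d pts C i | C <- enum [pred C : {set 'I_n} | #|C| == size]].

Definition r_cen (R : realFieldType) (M : Type) (d : M -> M -> R) (n : nat)
    (pts : 'I_n -> M) (k l : nat) : R :=
  best_cost d pts (k %/ l) 1.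
Definition r_opt (R : realFieldType) (M : Type) (d : M -> M -> R) (n : nat)
    (pts : 'I_n -> M) (k l : nat) : R :=
  best_cost d pts k l.

From HB Require Import structures.
From mathcomp Require Import all_boot all_order all_algebra.
From mathcomp Require Import lra.
Set Implicit Arguments. Unset Strict Implicit. Unset Printing Implicit Defensive.
Import Order.TTheory GRing.Theory Num.Theory.
Local Open Scope ring_scope.

(* Let C be an optimal set of k centers with
   radius r = r_opt, so every ball of radius r around a point of P contains
   at least l points of C.  Take a maximal set S of points of P that are
   pairwise more than 2r apart.  By maximality every point of P lies within
   2r of S, and by the triangle inequality the r-balls around the points of
   S are pairwise disjoint; each contains l points of C, hence
   #|S| * l <= k, i.e. #|S| <= k %/ l.  Enlarging S to a set of exactly
   k %/ l points only decreases distances to the nearest center, so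
   r_cen <= 2r. *)

Section SeqExtrema.
Variable R : realFieldType.

Lemma foldr_min_le (a : R) s x : x \in s -> foldr Num.min a s <= x.
Proof.
elim: s => [|y s IH] //=; rewrite inE => /orP[/eqP->|/IH h].
  by rewrite ge_min lexx.
by rewrite ge_min h orbT.
Qed.

Lemma foldr_max_ge (a : R) s x : x \in s -> x <= foldr Num.max a s.
Proof.
elim: s => [|y s IH] //=; rewrite inE => /orP[/eqP->|/IH h].
  by rewrite le_max lexx.
by rewrite le_max h orbT.
Qed.

Lemma foldr_min_mem (a : R) s : foldr Num.min a s \in a :: s.
Proof.
elim: s => [|x s IH] /=; first by rewrite inE.
rewrite /Num.min; case: ifP => _; first by rewrite !inE eqxx orbT.
by move: IH; rewrite !inE => /orP[->|->]; rewrite ?orbT.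
Qed.

Lemma foldr_max_mem (a : R) s : foldr Num.max a s \in a :: s.
Proof.
elim: s => [|x s IH] /=; first by rewrite inE.
rewrite /Num.max; case: ifP => _; last by rewrite !inE eqxx orbT.
by move: IH; rewrite !inE => /orP[->|->]; rewrite ?orbT.
Qed.

Lemma seqmin_le s (x : R) : x \in s -> seqmin s <= x.
Proof. exact: foldr_min_le. Qed.

Lemma seqmax_ge s (x : R) : x \in s -> x <= seqmax s.
Proof. exact: foldr_max_ge. Qed.

Lemma seqmin_mem (s : seq R) : s != [::] -> seqmin s \in s.
Proof.
case: s => [//|y s] _; change (foldr Num.min y (y :: s) \in y :: s); have := foldr_min_mem y (y :: s).
by rewrite inE => /orP[/eqP->|//]; rewrite inE eqxx.
Qed.

Lemma seqmax_mem (s : seq R) : s != [::] -> seqmax s \in s.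
Proof.
case: s => [//|y s] _; change (foldr Num.max y (y :: s) \in y :: s); have := foldr_max_mem y (y :: s).
by rewrite inE => /orP[/eqP->|//]; rewrite inE eqxx.
Qed.

End SeqExtrema.

Section FiniteSets.
Variable T : finType.

Lemma extend_to_card (S : {set T}) m : (#|S| <= m <= #|T|)%N ->
  exists2 S' : {set T}, S \subset S' & #|S'| = m.
Proof.
elim: m => [|m IH] /andP[Sm mT].
  by exists S => //; apply/eqP; rewrite -leqn0.
have [eSm | ltSm] := eqVneq #|S| m.+1; first by exists S.
have [S' sub cS'] : exists2 S' : {set T}, S \subset S' & #|S'| = m.
  by apply: IH; rewrite -ltnS ltn_neqAle ltSm Sm /= ltnW.
have [x xS'] : exists x, x \notin S'.
  have /card_gt0P[x] : (0 < #|~: S'|)%N by rewrite -(ltn_add2l #|S'|) addn0 cardsC cS'.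
  by rewrite inE; exists x.
by exists (x |: S'); [apply: subset_trans (subsetUr _ _) | rewrite cardsU1 xS' cS'].
Qed.

Lemma card_filter_sum (A : {set T}) (P : pred T) :
  #|[set x in A | P x]| = (\sum_(x in A) (P x : nat))%N.
Proof.
rewrite -sum1_card [RHS]big_mkcond [LHS]big_mkcond; apply: eq_bigr => x _.
by rewrite inE; case: (x \in A); case: (P x).
Qed.

End FiniteSets.

Lemma disjoint_family_card (I T : finType) (S : {set I}) (C : {set T})
    (B : I -> pred T) l :
  (forall s, s \in S -> l <= #|[set t in C | B s t]|)%N ->
  (forall s1 s2 t, s1 \in S -> s2 \in S -> B s1 t -> B s2 t -> s1 = s2) ->
  (#|S| * l <= #|C|)%N.
Proof.
move=> large disj; rewrite -sum_nat_const.
apply: (@leq_trans (\sum_(s in S) #|[set t in C | B s t]|)%N); first exact: leq_sum.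
under eq_bigr => s _ do rewrite card_filter_sum.
rewrite exchange_big /= -sum1_card; apply: leq_sum => t _.
rewrite -card_filter_sum; apply/card_le1_eqP => s1 s2; rewrite !inE.
by move=> /andP[s1S h1] /andP[s2S h2]; apply: disj h2 h1.
Qed.

Section Radii.
Variables (R : realFieldType) (M : Type) (d : M -> M -> R).
Variables (n : nat) (pts : 'I_n -> M).

Lemma dS1_le (S : {set 'I_n}) p s : s \in S -> dS d pts S p 1 <= d p (pts s).
Proof.
move=> sS; apply: seqmin_le; rewrite mem_filter; apply/andP; split.
  by rewrite card_gt0; apply/set0Pn; exists s; rewrite inE sS lexx.
by apply: map_f; rewrite mem_enum.
Qed.

Lemma dS_ball (S : {set 'I_n}) p i : (0 < i <= #|S|)%N ->
  (i <= #|[set t in S | (d p (pts t) <= dS d pts S p i)%R]|)%N.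
Proof.
move=> /andP[i0 iS].
set L := [seq d p (pts s) | s in S].
set F := [seq r <- L | (i <= #|[set t in S | (d p (pts t) <= r)%R]|)%N].
have [s0 s0S] : exists s, s \in S by apply/card_gt0P; exact: leq_trans iS.
have LN : L != [::].
  apply/eqP => eL; have : d p (pts s0) \in L by apply: map_f; rewrite mem_enum.
  by rewrite eL.
have maxF : seqmax L \in F.
  rewrite /F mem_filter; apply/andP; split; last exact: seqmax_mem LN.
  apply: (leq_trans iS).
  apply: subset_leq_card; apply/subsetP => t tS; rewrite inE tS /=.
  by apply: seqmax_ge; apply: map_f; rewrite mem_enum.
have FN : F != [::] by apply/eqP => eF; rewrite eF in maxF.
by have := seqmin_mem FN; rewrite mem_filter => /andP[].
Qed.

Lemma dS_le_cost (S : {set 'I_n}) i p : dS d pts S (pts p) i <= cost d pts S i.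
Proof. by apply: seqmax_ge; apply: map_f; rewrite mem_enum. Qed.

Lemma cost_le (S : {set 'I_n}) i B : (0 < n)%N ->
  (forall p, dS d pts S (pts p) i <= B) -> cost d pts S i <= B.
Proof.
rewrite /cost => n0 bound; set L := [seq dS d pts S (pts p) i | p : 'I_n].
have LN : L != [::].
  apply/eqP => eL; have : dS d pts S (pts (Ordinal n0)) i \in L.
    by apply: map_f; rewrite mem_enum.
  by rewrite eL.
by have /mapP[p _ ->] := seqmax_mem LN.
Qed.

Lemma best_cost_le (C : {set 'I_n}) sz i :
  #|C| = sz -> best_cost d pts sz i <= cost d pts C i.
Proof. by move=> hC; apply: seqmin_le; apply: map_f; rewrite mem_enum inE hC. Qed.

Lemma best_cost_attained sz i : (sz <= n)%N ->
  exists2 C : {set 'I_n}, #|C| = sz & best_cost d pts sz i = cost d pts C i.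
Proof.
move=> szn; have [C0 _ hC0] : exists2 C0 : {set 'I_n}, set0 \subset C0 & #|C0| = sz.
  by apply: extend_to_card; rewrite cards0 card_ord.
rewrite /best_cost; set L := [seq cost d pts C i | C <- enum [pred C : {set 'I_n} | #|C| == sz]].
have LN : L != [::].
  apply/eqP => eL; have : cost d pts C0 i \in L
    by apply: map_f; rewrite mem_enum inE hC0.
  by rewrite eL.
by have /mapP[C] := seqmin_mem LN; rewrite mem_enum inE => /eqP; exists C.
Qed.

End Radii.

Section Packing.
Variables (R : realFieldType) (M : Type) (d : M -> M -> R).
Hypothesis metric_d : is_metric d.
Variables (I : finType) (x : I -> M).

Lemma dist_self z : d z z = 0.
Proof. by case: metric_d => d0 _ _; apply/d0. Qed.

Lemma dist_sym y z : d y z = d z y.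
Proof. by case: metric_d. Qed.

Lemma dist_tri y z w : d y w <= d y z + d z w.
Proof. by case: metric_d. Qed.

Lemma dist_ge0 y z : 0 <= d y z.
Proof. by have := dist_tri y z y; rewrite dist_self (dist_sym z); lra. Qed.

Definition separated (delta : R) (S : {set I}) : bool :=
  [forall s1 in S, forall s2 in S, (s1 != s2) ==> (delta < d (x s1) (x s2))].

(* A maximal delta-separated set is a delta-net: it exists and every point
   lies within delta of it. *)
Lemma separated_net (delta : R) : 0 <= delta ->
  exists2 S : {set I}, separated delta S &
    forall p, exists2 s, s \in S & d (x p) (x s) <= delta.
Proof.
move=> delta0.
have sep0 : separated delta set0 by apply/forall_inP => s; rewrite inE.
case: (@arg_maxnP _ set0 (separated delta) (fun S => #|S|) sep0) => S sepS maxS.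
exists S => // p; apply/exists_inP; apply: contraT => /exists_inPn far.
have pS : p \notin S by apply/negP => /far; rewrite dist_self delta0.
have : separated delta (p |: S).
  apply/forall_inP => s1 s1S; apply/forall_inP => s2 s2S; apply/implyP => ne.
  move: s1S s2S ne; rewrite !inE.
  case/orP=> [/eqP-> | s1S]; case/orP=> [/eqP-> | s2S]; rewrite ?eqxx // => ne.
  - by rewrite ltNge far.
  - by rewrite dist_sym ltNge far.
  - by move/forall_inP: sepS => /(_ s1 s1S) /forall_inP /(_ s2 s2S); rewrite ne.
by move=> /maxS; rewrite cardsU1 pS /= add1n ltnn.
Qed.

Lemma separated_balls_disjoint (r : R) (S : {set I}) s1 s2 y :
  separated (2 * r) S -> s1 \in S -> s2 \in S ->
  d (x s1) y <= r -> d (x s2) y <= r -> s1 = s2.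
Proof.
move=> sepS s1S s2S h1 h2; apply/eqP; apply: contraT => ne.
move/forall_inP: sepS => /(_ s1 s1S) /forall_inP /(_ s2 s2S).
rewrite ne /= => far; have := dist_tri (x s1) y (x s2).
rewrite (dist_sym y); lra.
Qed.

End Packing.

Theorem mainTheorem7 (R : realFieldType) (M : Type) (d : M -> M -> R)
    (n : nat) (pts : 'I_n -> M) (k l : nat) :
  is_metric d -> injective pts ->
  (1 <= l)%N -> (l <= k)%N -> (k <= n)%N ->
  r_cen d pts k l <= 2 * r_opt d pts k l.
Proof.
move=> metric_d _ l1 lk kn; rewrite /r_opt /r_cen.
have n0 : (0 < n)%N by apply: leq_trans kn; apply: leq_trans lk.
have [C sizeC ->] := best_cost_attained d pts l kn; set r := cost d pts C l.
have ball p : (l <= #|[set t in C | (d (pts p) (pts t) <= r)%R]|)%N.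
  apply: leq_trans (dS_ball d pts (S := C) (pts p) _) _; first by rewrite l1 sizeC.
  apply: subset_leq_card; apply/subsetP => t; rewrite !inE => /andP[-> h].
  by apply: le_trans h _; apply: dS_le_cost.
have r0 : 0 <= r.
  have /card_gt0P[t] := leq_trans l1 (ball (Ordinal n0)).
  by rewrite inE => /andP[_]; apply: le_trans (dist_ge0 metric_d _ _).
(* A 2r-net S of P; its r-balls are disjoint, so #|S| <= k %/ l. *)
have [S sepS cover] := separated_net metric_d pts (mulr_ge0 (ler0n _ 2) r0).
have packS : (#|S| * l <= k)%N.
  by rewrite -sizeC; apply: disjoint_family_card => [s _ | s1 s2 t];
    [exact: ball | exact: separated_balls_disjoint sepS].
have [S' subS' cardS'] : exists2 S' : {set 'I_n}, S \subset S' & #|S'| = (k %/ l)%N.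
  by apply: extend_to_card; rewrite leq_divRL // packS card_ord (leq_trans (leq_div _ _)).
(* Any superset S' of the net of size k %/ l has radius at most 2r. *)
apply: le_trans (best_cost_le d pts 1 cardS') _.
apply: (cost_le (d := d) (pts := pts) n0) => p.
have [s sS near] := cover p.
exact: le_trans (dS1_le d pts _ (subsetP subS' s sS)) near.
Qed.
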